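(* Let $\mathbf A$ be a real $n\times n$ matrix. Then $\mathbf A$ is eventually strictly $J$-sign-symmetric (ESJS) if and only if $\mathbf A=\mathbf D\widetilde{\mathbf A}\mathbf D^{-1}$ for some nonsingular real diagonal matrix $\mathbf D$ and some eventually positive matrix $\widetilde{\mathbf A}$.
   Context: For $J\subseteq[n]=\{1,\dots,n\}$ with $J^c=[n]\setminus J$, a real matrix $\mathbf B=\{b_{ij}\}$ is strictly $J$-sign-symmetric if $b_{ij}>0$ for $(i,j)\in (J\times J)\cup(J^c\times J^c)$ and $b_{ij}<0$ for $(i,j)\in(J\times J^c)\cup(J^c\times J)$; $\mathbf B$ is called SJS if it is strictly $J$-sign-symmetric for some $J\subseteq[n]$. A real matrix $\mathbf A$ is ESJS if there is a positive integer $k_0$ such that $\mathbf A^k$ is SJS for all $k\ge k_0$. A real matrix $\widetilde{\mathbf A}$ is eventually positive if there is a positive integer $k_0$ such that $\widetilde{\mathbf A}^k$ has all entries positive for all $k\ge k_0$. *)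

From mathcomp Require Import all_boot all_order all_algebra.
From mathcomp Require Import reals.
Set Implicit Arguments. Unset Strict Implicit. Unset Printing Implicit Defensive.
Import Order.TTheory GRing.Theory Num.Theory.
Local Open Scope ring_scope.

Definition strictly_J_sign_symmetric (R : numDomainType) (n : nat)
  (J : {set 'I_n}) (B : 'M[R]_n) : Prop :=
  forall i j : 'I_n,
    if (i \in J) == (j \in J) then 0 < B i j else B i j < 0.

Definition SJS (R : numDomainType) (n : nat) (B : 'M[R]_n) : Prop :=
  exists J : {set 'I_n}, strictly_J_sign_symmetric J B.

Definition ESJS (R : numDomainType) (n : nat) (A : 'M[R]_n) : Prop :=
  exists k0 : nat, (0 < k0)%N /\ forall k : nat, (k0 <= k)%N -> SJS (A ^+ k).

Definition eventually_positive (R : numDomainType) (n : nat) (A : 'M[R]_n) : Prop :=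
  exists k0 : nat, (0 < k0)%N /\
    forall k : nat, (k0 <= k)%N -> forall i j : 'I_n, 0 < (A ^+ k) i j.

From mathcomp Require Import all_boot all_order all_algebra.
From mathcomp Require Import reals.
Import Order.TTheory GRing.Theory Num.Theory.
Set Implicit Arguments. Unset Strict Implicit.
Local Open Scope ring_scope.

(* Let S_J be the diagonal sign matrix equal to 1 on J and -1 off J.  A matrix
   B is strictly J-sign-symmetric exactly when S_J B S_J is entrywise
   positive, and S_J B^k S_J = (S_J B S_J)^k; so powers of a J-sign-symmetric
   matrix are J-sign-symmetric.  If A^k is J_k-sign-symmetric for k >= k0,
   then A^(k k0) is both J_k- and J_k0-sign-symmetric, which forces J_k and
   J_k0 to define the same sign pattern: a single set J = J_k0 works for all
   large k, and S_J A S_J is eventually positive.  Conversely, the entries of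
   (D P D^-1)^k = D P^k D^-1 have the signs of d_i d_j when P^k > 0, so
   J = {i | d_i > 0} works. *)

Section SignSymmetry.
Variables (R : numDomainType) (n : nat).

Definition positive_mx (P : 'M[R]_n) := forall i j, 0 < P i j.

Lemma positive_mxM (P Q : 'M[R]_n) :
  positive_mx P -> positive_mx Q -> positive_mx (P *m Q).
Proof.
move=> hP hQ i j; rewrite mxE (bigD1 i) //=.
apply: (lt_le_trans (mulr_gt0 (hP i i) (hQ i j))).
by rewrite lerDl; apply: sumr_ge0 => k _; apply: mulr_ge0; apply: ltW.
Qed.

Lemma positive_mxX (P : 'M[R]_n) m :
  positive_mx P -> (0 < m)%N -> positive_mx (P ^+ m).
Proof.
move=> hP; elim: m => // [[|m]] IH _; first by rewrite expr1.
by rewrite exprS; apply: positive_mxM => //; apply: IH.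
Qed.

Lemma invmx_right (S T : 'M[R]_n) : S *m T = 1%:M -> invmx S = T.
Proof.
move=> hST; have [uS _] := mulmx1_unit hST.
by rewrite -[invmx S]mulmx1 -hST mulmxA mulVmx // mul1mx.
Qed.

Lemma unitmx_conjX (S B : 'M[R]_n) m : S \in unitmx ->
  (S *m B *m invmx S) ^+ m = S *m B ^+ m *m invmx S.
Proof.
move=> uS; elim: m => [|m IH]; first by rewrite !expr0 mulmx1 mulmxV.
rewrite !exprS IH -!mulmxE !mulmxA.
by rewrite -[S *m B *m invmx S *m S]mulmxA mulVmx // mulmx1.
Qed.

Lemma diag_conj_entry (d e : 'rV[R]_n) (B : 'M[R]_n) i j :
  (diag_mx d *m B *m diag_mx e) i j = d 0 i * B i j * e 0 j.
Proof. by rewrite mul_mx_diag mxE mul_diag_mx mxE. Qed.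

Definition sign_vec (J : {set 'I_n}) : 'rV[R]_n :=
  \row_i (if i \in J then 1 else -1).

Lemma sign_vec_neq0 J i : sign_vec J 0 i != 0.
Proof. by rewrite mxE; case: (i \in J); rewrite ?oppr_eq0 oner_eq0. Qed.

Lemma sign_diag_sqr J :
  diag_mx (sign_vec J) *m diag_mx (sign_vec J) = 1%:M.
Proof.
rewrite mulmx_diag; apply/matrixP => i j; rewrite !mxE.
by case: (i \in J); rewrite ?mulr1 ?mulrNN ?mulr1.
Qed.

Lemma invmx_sign_diag J :
  invmx (diag_mx (sign_vec J)) = diag_mx (sign_vec J).
Proof. exact/invmx_right/sign_diag_sqr. Qed.

Lemma sign_diag_unit J : diag_mx (sign_vec J) \in unitmx.
Proof. by have [] := mulmx1_unit (sign_diag_sqr J). Qed.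

Lemma sjs_sign_conjE J (B : 'M[R]_n) :
  strictly_J_sign_symmetric J B <->
  positive_mx (diag_mx (sign_vec J) *m B *m diag_mx (sign_vec J)).
Proof.
split=> h i j; have := h i j; rewrite diag_conj_entry !mxE;
  by case: (i \in J); case: (j \in J);
     rewrite /= ?mul1r ?mulr1 ?mulN1r ?mulrN1 ?opprK ?oppr_gt0.
Qed.

Lemma sjsX J (B : 'M[R]_n) m : strictly_J_sign_symmetric J B -> (0 < m)%N ->
  strictly_J_sign_symmetric J (B ^+ m).
Proof.
move=> /sjs_sign_conjE hB m_gt0; apply/sjs_sign_conjE.
rewrite -{2}invmx_sign_diag -unitmx_conjX ?sign_diag_unit //.
by rewrite invmx_sign_diag; apply: positive_mxX.
Qed.

(* The sign pattern of a strictly sign-symmetric matrix determines the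
   relation "i and j lie on the same side of J". *)
Lemma sjs_transfer J J' (B C : 'M[R]_n) :
  strictly_J_sign_symmetric J B -> strictly_J_sign_symmetric J' B ->
  strictly_J_sign_symmetric J C -> strictly_J_sign_symmetric J' C.
Proof.
move=> hB hB' hC i j; move: (hB i j) (hB' i j) (hC i j).
case: ((i \in J) == (j \in J)); case: ((i \in J') == (j \in J')) => //;
  by move=> h1 h2; have := lt_trans h1 h2; rewrite ltxx.
Qed.

Lemma ESJS_fixed_set (A : 'M[R]_n) : ESJS A ->
  exists k0 : nat, (0 < k0)%N /\ exists J : {set 'I_n},
    forall k, (k0 <= k)%N -> strictly_J_sign_symmetric J (A ^+ k).
Proof.
move=> [k0 [k0_gt0 hA]]; have [J hJ] := hA k0 (leqnn k0).
exists k0; split => //; exists J => k k0_le_k.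
have [Jk hJk] := hA k k0_le_k.
apply: (sjs_transfer (B := A ^+ (k * k0)) _ _ hJk).
- by rewrite exprM; apply: sjsX.
- by rewrite mulnC exprM; apply: sjsX (leq_trans k0_gt0 k0_le_k).
Qed.

End SignSymmetry.

Lemma sign_mul_pos_div (R : realFieldType) (x p y : R) :
  x != 0 -> y != 0 -> 0 < p ->
  if (0 < x) == (0 < y) then 0 < x * p * y^-1 else x * p * y^-1 < 0.
Proof.
move=> x_neq0 y_neq0 p_gt0.
have [x_gt0|x_lt0|x0] := ltrgtP 0 x; last by rewrite -x0 eqxx in x_neq0.
- have [y_gt0|y_lt0|y0] := ltrgtP 0 y; last by rewrite -y0 eqxx in y_neq0.
  + by rewrite /= mulr_gt0 ?invr_gt0 // mulr_gt0.
  + by rewrite /= pmulr_rlt0 ?invr_lt0 // mulr_gt0.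
- have [y_gt0|y_lt0|y0] := ltrgtP 0 y; last by rewrite -y0 eqxx in y_neq0.
  + by rewrite /= pmulr_llt0 ?invr_gt0 // nmulr_rlt0.
  + by rewrite /= nmulr_rgt0 ?invr_lt0 // nmulr_rlt0.
Qed.

Section DiagonalConjugation.
Variables (R : realFieldType) (n : nat) (d : 'rV[R]_n).
Hypothesis d_neq0 : forall i, d 0 i != 0.

Let d_inv : 'rV[R]_n := \row_i (d 0 i)^-1.

Lemma diag_mul_inv : diag_mx d *m diag_mx d_inv = 1%:M.
Proof.
by rewrite mulmx_diag; apply/matrixP => i j; rewrite !mxE divff.
Qed.

Lemma invmx_diag : invmx (diag_mx d) = diag_mx d_inv.
Proof. exact/invmx_right/diag_mul_inv. Qed.

Lemma diag_unit : diag_mx d \in unitmx.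
Proof. by have [] := mulmx1_unit diag_mul_inv. Qed.

Lemma sjs_diag_conj (P : 'M[R]_n) : positive_mx P ->
  strictly_J_sign_symmetric [set i | 0 < d 0 i]
    (diag_mx d *m P *m invmx (diag_mx d)).
Proof.
move=> hP i j; rewrite invmx_diag diag_conj_entry !inE mxE.
exact: sign_mul_pos_div.
Qed.

End DiagonalConjugation.

Theorem lemma2 (R : realType) (n : nat) (A : 'M[R]_n) :
  ESJS A <->
  exists (d : 'rV[R]_n) (At : 'M[R]_n),
    (forall i : 'I_n, d 0 i != 0) /\
    eventually_positive At /\
    A = diag_mx d *m At *m invmx (diag_mx d).
Proof.
split.
- move=> /ESJS_fixed_set [k0 [k0_gt0 [J hJ]]].
  set D := diag_mx (sign_vec R J).
  exists (sign_vec R J), (D *m A *m D); split; first exact: sign_vec_neq0.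
  split.
  + exists k0; split => // k /hJ /sjs_sign_conjE.
    by rewrite -{2}invmx_sign_diag -unitmx_conjX ?sign_diag_unit ?invmx_sign_diag.
  + by rewrite invmx_sign_diag !mulmxA sign_diag_sqr mul1mx -mulmxA
       sign_diag_sqr mulmx1.
- move=> [d [At [d_neq0 [[k0 [k0_gt0 hAt]] ->]]]].
  exists k0; split => // k /hAt hk; exists [set i | 0 < d 0 i].
  by rewrite unitmx_conjX ?diag_unit //; apply: sjs_diag_conj.
Qed.
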